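(* Let $G=(V,E)$ be a finite graph with at least one vertex and $k>0$ an integer. Then $G$ has a bramble of order at least $k$ if and only if $G$ has an $\mathcal F_k$-tangle of $S_k$, where $\mathcal F_k$ is the set of all stars $\sigma=\{(A_i,B_i):i=0,\dots,n\}\subseteq\vec S_k$ with $\bigl|\bigcap_{i=0}^nB_i\bigr|<k$.
   Context: An oriented vertex separation of $G$ is an ordered pair $(A,B)$ with $A\cup B=V$ and no edge between $A\setminus B$ and $B\setminus A$; $(A,B)\le(C,D)$ iff $A\subseteq C$ and $B\supseteq D$; $(A,B)^*=(B,A)$. $\vec S_k$ is the set of those with $|A\cap B|<k$, and $S_k$ the set of pairs $\{(A,B),(B,A)\}$ with $(A,B)\in\vec S_k$. A star is a nonempty set $\sigma$ with $\vec r\le\vec s^{\,*}$ for all distinct $\vec r,\vec s\in\sigma$. An orientation of $S_k$ contains exactly one of $(A,B),(B,A)$ for each such pair; it is consistent if there are no distinct $r,s\in S_k$ with orientations $\vec r<\vec s$ such that $\vec r^{\,*},\vec s\in O$; an $\mathcal F_k$-tangle is a consistent orientation of $S_k$ no subset of which lies in $\mathcal F_k$. Two vertex sets touch if they share a vertex or $G$ has an edge between them. A bramble is a set of vertex sets each inducing a connected subgraph, any two of which touch; its order is the minimum size of a vertex set meeting every element of the bramble. *)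

From mathcomp Require Import all_boot.
Set Implicit Arguments. Unset Strict Implicit. Unset Printing Implicit Defensive.

Section Defs.
Variables (T : finType) (e : rel T).

Definition osep := ({set T} * {set T})%type.

Definition is_osep (s : osep) : Prop :=
  s.1 :|: s.2 = setT /\
  forall x y, x \in s.1 :\: s.2 -> y \in s.2 :\: s.1 -> ~~ e x y.

Definition sep_le (r s : osep) : Prop := r.1 \subset s.1 /\ s.2 \subset r.2.

Definition flip (s : osep) : osep := (s.2, s.1).

Definition in_vSk (k : nat) (s : osep) : Prop := is_osep s /\ #|s.1 :&: s.2| < k.

Definition is_star (sigma : {set osep}) : Prop :=
  sigma != set0 /\
  forall r s, r \in sigma -> s \in sigma -> r <> s -> sep_le r (flip s).

Definition in_Fk (k : nat) (sigma : {set osep}) : Prop :=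
  (forall s, s \in sigma -> in_vSk k s) /\ is_star sigma /\
  #|\bigcap_(s in sigma) s.2| < k.

Definition is_orientation (k : nat) (O : {set osep}) : Prop :=
  (forall s, s \in O -> in_vSk k s) /\
  (forall s, in_vSk k s -> #|O :&: [set s; flip s]| = 1).

Definition consistent (k : nat) (O : {set osep}) : Prop :=
  forall r s, in_vSk k r -> in_vSk k s -> r <> s -> r <> flip s ->
    sep_le r s -> ~ (flip r \in O /\ s \in O).

Definition Fk_tangle (k : nat) (O : {set osep}) : Prop :=
  is_orientation k O /\ consistent k O /\
  forall sigma : {set osep}, sigma \subset O -> ~ in_Fk k sigma.

Definition connected_set (X : {set T}) : Prop :=
  X != set0 /\
  forall x y, x \in X -> y \in X ->
    connect [rel u v | [&& e u v, u \in X & v \in X]] x y.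

Definition touch (X Y : {set T}) : Prop :=
  X :&: Y != set0 \/ exists x y, [/\ x \in X, y \in Y & e x y].

Definition is_bramble (B : {set {set T}}) : Prop :=
  (forall X, X \in B -> connected_set X) /\
  (forall X Y, X \in B -> Y \in B -> touch X Y).

Definition covers (B : {set {set T}}) (X : {set T}) : bool :=
  [forall Y in B, X :&: Y != set0].

(* order: minimum size of a set meeting every element of B
   (the default #|T| is never smaller than the true minimum, since setT
   meets every nonempty element) *)
Definition bramble_order (B : {set {set T}}) : nat :=
  \big[minn/#|T|]_(X : {set T} | covers B X) #|X|.

End Defs.

(* A bramble of order at least k orients every separation (A, B) of order < k
   towards B when some bramble element lies in B \ A: some element avoids A ∩ B
   and, being connected, lies in A \ B or in B \ A, and touching elements
   cannot lie on opposite sides.  The same argument excludes forbidden stars: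
   the small sides A_i \ B_i of a star are pairwise non-adjacent, so an element
   avoiding the intersection of the B_i lies in one of them.
   Conversely, a tangle yields the bramble of all connected X whose separation
   (V \ X, X ∪ N(X)) is in the tangle; consistency makes these sets touch.  If
   |Y| < k, some component C of G - Y belongs to it, for otherwise the
   separations (C ∪ N(C), V \ C) form a forbidden star, their big sides meeting
   in Y.  Hence no set of fewer than k vertices meets every element. *)

From mathcomp Require Import all_boot.
Set Implicit Arguments. Unset Strict Implicit. Unset Printing Implicit Defensive.

Lemma bigmin_leq (I : eqType) (r : seq I) (P : pred I) (F : I -> nat) d i :
  i \in r -> P i -> \big[minn/d]_(j <- r | P j) F j <= F i.
Proof.
elim: r => // j r IHr; rewrite inE big_cons => /predU1P[-> -> | ir Pi].
  exact: geq_minl.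
by case: ifP => _; [apply: leq_trans (geq_minr _ _) _ |]; apply: IHr.
Qed.

Lemma card_setI_pair (U : finType) (O : {set U}) a b :
  a \in O -> b \notin O -> #|O :&: [set a; b]| = 1.
Proof.
move=> aO bO; rewrite (_ : O :&: _ = [set a]) ?cards1 //.
apply/setP => u; rewrite !inE; have [-> | _] := eqVneq u a; first by rewrite aO.
by have [-> | _] := eqVneq u b; rewrite ?(negbTE bO) ?andbF.
Qed.

Section BrambleTangle.
Variables (T : finType) (e : rel T).
Hypothesis e_sym : symmetric e.

Implicit Types (X Y P : {set T}) (r s : osep T) (O sigma : {set osep T}).

Lemma flipK : involutive (@flip T).
Proof. by case. Qed.

Lemma is_osep_flip s : is_osep e s -> is_osep e (flip s).
Proof.
case=> cover noedge; split=> [|x y xA yB]; first by rewrite setUC.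
by rewrite e_sym; apply: noedge.
Qed.

Lemma in_vSk_flip k s : in_vSk e k s -> in_vSk e k (flip s).
Proof. by case=> sepS small; split; [apply: is_osep_flip | rewrite setIC]. Qed.

Definition is_osepb s : bool :=
  (s.1 :|: s.2 == setT) &&
  [forall x, forall y, (x \in s.1 :\: s.2) ==> (y \in s.2 :\: s.1) ==> ~~ e x y].

Lemma is_osepP s : reflect (is_osep e s) (is_osepb s).
Proof.
apply: (iffP andP) => [[/eqP cover /forallP noedge] | [cover noedge]].
  by split=> // x y xA yB; move: (noedge x) => /forallP/(_ y); rewrite xA yB.
split; first exact/eqP.
by do 2!apply/forallP => ?; do 2!apply/implyP => ?; apply: noedge.
Qed.

Lemma osep_memNr s x : is_osep e s -> x \notin s.2 -> x \in s.1.
Proof.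
case=> cover _ xB; have : x \in s.1 :|: s.2 by rewrite cover inE.
by rewrite inE (negbTE xB) orbF.
Qed.

Lemma osep_sides s x : is_osep e s -> x \notin s.1 :&: s.2 ->
  (x \in s.1 :\: s.2) || (x \in s.2 :\: s.1).
Proof.
case=> cover _; have : x \in s.1 :|: s.2 by rewrite cover inE.
by rewrite !inE; case: (x \in s.1); case: (x \in s.2).
Qed.

Lemma osep_not_touch s X Y : is_osep e s ->
  X \subset s.1 :\: s.2 -> Y \subset s.2 :\: s.1 -> ~ touch e X Y.
Proof.
rewrite /touch; case=> _ noedge /subsetP sXA /subsetP sYB.
case=> [/set0Pn[z /setIP[/sXA zA /sYB zB]] |].
  by move: zA zB; rewrite !inE => /andP[/negP zB' _] /andP[_ /zB'].
by case=> x [y [xX yY exy]]; move: (noedge x y (sXA x xX) (sYB y yY)); rewrite exy.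
Qed.

Definition induced X := [rel u v | [&& e u v, u \in X & v \in X]].

Definition connectedb X :=
  (X != set0) && [forall x in X, forall y in X, connect (induced X) x y].

Lemma connectedP X : reflect (connected_set e X) (connectedb X).
Proof.
apply: (iffP andP) => [[ne /forall_inP conn] | [ne conn]]; split=> //.
  by move=> x y xX yX; move/forall_inP: (conn x xX); apply.
by apply/forall_inP => x xX; apply/forall_inP => y yX; apply: conn.
Qed.

Lemma connected_set_sub X P x : connected_set e X -> x \in X -> x \in P ->
  (forall a b, a \in X -> b \in X -> e a b -> a \in P -> b \in P) -> X \subset P.
Proof.
case=> _ conn xX xP closedP; apply/subsetP => y /(conn x y xX) /connectP[p].
elim: p x xX xP => [|z p IHp] x xX xP /=; first by move=> _ ->.
by case/andP=> /and3P[exz _ zX]; apply: IHp (closedP x z xX zX exz xP).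
Qed.

Lemma connected_set_side s X : is_osep e s -> connected_set e X ->
  [disjoint X & s.1 :&: s.2] -> X \subset s.1 :\: s.2 \/ X \subset s.2 :\: s.1.
Proof.
move=> sepS connX dis; have [/set0Pn[x xX] _] := connX.
have side y : y \in X -> (y \in s.1 :\: s.2) || (y \in s.2 :\: s.1).
  by move=> yX; apply: osep_sides => //; rewrite (disjointFr dis yX).
have [_ noedge] := sepS.
case/orP: (side x xX) => xS; [left | right]; apply: (connected_set_sub connX xX xS);
  move=> a b aX bX eab aS; case/orP: (side b bX) => // bS; exfalso.
- by move: (noedge a b aS bS); rewrite eab.
- by move: (noedge b a bS aS); rewrite e_sym eab.
Qed.

Lemma star_connected_side sigma X :
  (forall s, s \in sigma -> is_osep e s) -> is_star sigma -> connected_set e X ->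
  [disjoint X & \bigcap_(s in sigma) s.2] ->
  exists2 s, s \in sigma & X \subset s.1 :\: s.2.
Proof.
move=> sepS [_ star] connX dis; have [/set0Pn[x xX] _] := connX.
have outside y : y \in X -> exists2 s, s \in sigma & y \notin s.2.
  move=> yX; case: (pickP [pred s in sigma | y \notin s.2]) => [s /andP[] | none].
    by exists s.
  move: (disjointFr dis yX); rewrite (_ : y \in _) //; apply/bigcapP => s sS.
  by move: (none s); rewrite /= sS => /negbFE.
have [s sS xB] := outside x xX; exists s => //.
apply: (connected_set_sub connX xX); first by rewrite inE xB (osep_memNr (sepS s sS)).
move=> a b aX bX eab aS; have [s' s'S bB'] := outside b bX.
have bA' := osep_memNr (sepS s' s'S) bB'.
have [eqs | neq] := eqVneq s' s; first by rewrite -eqs inE bB'.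
have [sAB' s'AB] := star s s' sS s'S (nesym (elimN eqP neq)).
have bB : b \in s.2 :\: s.1.
  by rewrite inE (subsetP s'AB _ bA') andbT; apply: contra bB' => /(subsetP sAB').
by have [_ noedge] := sepS s sS; move: (noedge a b aS bB); rewrite eab.
Qed.

Lemma bramble_order_geP k (B : {set {set T}}) :
  k <= bramble_order B <-> k <= #|T| /\ forall Y, covers B Y -> k <= #|Y|.
Proof.
rewrite /bramble_order; split=> [kB | [kT kY]]; last first.
  by apply: (big_ind (leq k)) => // m n km kn; rewrite leq_min km kn.
split=> [|Y coverY]; apply: leq_trans kB _.
  apply: (big_ind (fun n => n <= #|T|)) => [// | m n mT _ | X _].
    exact: leq_trans (geq_minl _ _) mT.
  exact: max_card.
by apply: bigmin_leq; rewrite ?mem_index_enum.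
Qed.

Lemma bramble_avoid k (B : {set {set T}}) Y :
  k <= bramble_order B -> #|Y| < k -> exists2 X, X \in B & [disjoint X & Y].
Proof.
move=> /bramble_order_geP[_ kY] Yk; case/boolP: (covers B Y) => [/kY | ].
  by rewrite leqNgt Yk.
rewrite negb_forall_in => /exists_inP[X XB]; rewrite negbK setI_eq0 => disYX.
by exists X; rewrite // disjoint_sym.
Qed.

Section BrambleToTangle.
Variables (k : nat) (B : {set {set T}}).
Hypotheses (brB : is_bramble e B) (ordB : k <= bramble_order B).

Definition bramble_orientation : {set osep T} :=
  [set s | [&& is_osepb s, #|s.1 :&: s.2| < k & [exists X in B, X \subset s.2 :\: s.1]]].

Lemma mem_bramble_orientation s : s \in bramble_orientation <->
  in_vSk e k s /\ exists2 X, X \in B & X \subset s.2 :\: s.1.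
Proof.
rewrite inE; split=> [/and3P[/is_osepP sepS small /exists_inP[X XB sX]] | ].
  by split=> //; exists X.
by case=> [[/is_osepP sepS small] [X XB sX]]; rewrite sepS small; apply/exists_inP; exists X.
Qed.

Lemma bramble_orientationN s :
  s \in bramble_orientation -> flip s \notin bramble_orientation.
Proof.
move=> /mem_bramble_orientation[[sepS _] [X XB sX]].
apply/negP => /mem_bramble_orientation[_ [Y YB sY]].
exact: osep_not_touch sepS sY sX (brB.2 Y X YB XB).
Qed.

Lemma bramble_sep_side s : in_vSk e k s ->
  exists2 X, X \in B & X \subset s.1 :\: s.2 \/ X \subset s.2 :\: s.1.
Proof.
case=> sepS small; have [X XB disX] := bramble_avoid ordB small.
by exists X => //; apply: connected_set_side => //; apply: brB.1.
Qed.

Lemma bramble_orientation_is_orientation : is_orientation e k bramble_orientation.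
Proof.
split=> [s /mem_bramble_orientation[] // | s vs].
have [X XB [sX | sX]] := bramble_sep_side vs.
  have fO : flip s \in bramble_orientation.
    by apply/mem_bramble_orientation; split; [apply: in_vSk_flip | exists X].
  rewrite setUC card_setI_pair //; apply: contraNN (bramble_orientationN fO).
  by rewrite flipK.
have sO : s \in bramble_orientation by apply/mem_bramble_orientation; split=> //; exists X.
by rewrite card_setI_pair // bramble_orientationN.
Qed.

Lemma bramble_orientation_consistent : consistent e k bramble_orientation.
Proof.
move=> r s _ _ _ _ [r1s1 s2r2] [/mem_bramble_orientation[_ [X XB sX]]].
move=> /mem_bramble_orientation[[sepS _] [Y YB sY]].
apply: osep_not_touch sepS _ sY (brB.2 X Y XB YB).
exact: subset_trans sX (subset_trans (setSD _ r1s1) (setDS _ s2r2)).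
Qed.

Lemma bramble_orientation_Fk_free sigma :
  sigma \subset bramble_orientation -> ~ in_Fk e k sigma.
Proof.
move=> /subsetP sO [vsigma [star small]].
have [X XB disX] := bramble_avoid ordB small.
have [s sS sX] : exists2 s, s \in sigma & X \subset s.1 :\: s.2.
  by apply: star_connected_side => //; [move=> s /vsigma[] | apply: brB.1].
have /mem_bramble_orientation[[sepS _] [Y YB sY]] := sO s sS.
exact: osep_not_touch sepS sX sY (brB.2 X Y XB YB).
Qed.

Lemma bramble_orientation_tangle : Fk_tangle e k bramble_orientation.
Proof.
split; first exact: bramble_orientation_is_orientation.
by split; [apply: bramble_orientation_consistent | apply: bramble_orientation_Fk_free].
Qed.

End BrambleToTangle.

Definition nbhd X := [set u | (u \notin X) && [exists w in X, e u w]].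

Definition sep_of X : osep T := (~: X, X :|: nbhd X).

Lemma is_osep_sep_of X : is_osep e (sep_of X).
Proof.
split=> [|x y]; first by apply/setP => u; rewrite !inE; case: (u \in X).
rewrite !inE negb_or negbK => /andP[/andP[xX xN] _] /andP[yX _].
by apply: contraNN xN => exy; rewrite xX; apply/exists_inP; exists y.
Qed.

Lemma sep_of_meet X : (sep_of X).1 :&: (sep_of X).2 = nbhd X.
Proof. by apply/setP => u; rewrite !inE; case: (u \in X); rewrite ?andbF. Qed.

Definition touchb X Y :=
  (X :&: Y != set0) || [exists x in X, exists y in Y, e x y].

Lemma touchP X Y : reflect (touch e X Y) (touchb X Y).
Proof.
apply: (iffP orP) => [[meet | /exists_inP[x xX /exists_inP[y yY exy]]] |
                      [meet | [x [y [xX yY exy]]]]]; [by left | | by left |].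
  by right; exists x, y.
by right; apply/exists_inP; exists x => //; apply/exists_inP; exists y.
Qed.

Lemma touchbC X Y : touchb X Y = touchb Y X.
Proof.
rewrite /touchb setIC; congr (_ || _).
by apply/exists_inP/exists_inP => -[x xX /exists_inP[y yY exy]]; exists y => //;
  apply/exists_inP; exists x; rewrite // e_sym.
Qed.

Lemma not_touchb_subC X Y : ~~ touchb X Y -> X :|: nbhd X \subset ~: Y.
Proof.
rewrite negb_or negbK setI_eq0 => /andP[disXY noedge]; apply/subsetP => u.
rewrite !inE => /orP[uX | /andP[_ /exists_inP[w wX euw]]].
  by rewrite (disjointFr disXY uX).
apply/negP => uY; case/exists_inP: noedge; exists w => //.
by apply/exists_inP; exists u; rewrite // e_sym.
Qed.

Lemma sep_of_le X Y : ~~ touchb X Y -> sep_le (flip (sep_of X)) (sep_of Y).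
Proof.
move=> nt; split; first exact: not_touchb_subC.
by apply: not_touchb_subC; rewrite touchbC.
Qed.

Lemma orientation_mem k O s : is_orientation e k O -> in_vSk e k s ->
  s \in O \/ flip s \in O.
Proof.
case=> _ orO vs; have : 0 < #|O :&: [set s; flip s]| by rewrite orO.
by rewrite card_gt0 => /set0Pn[u /setIP[uO /set2P[] <-]]; [left | right].
Qed.

Lemma orientationN k O s : is_orientation e k O -> in_vSk e k s ->
  s \in O -> flip s != s -> flip s \notin O.
Proof.
case=> _ orO vs sO fs; apply/negP => fO; move: (orO s vs).
rewrite (setIidPr _) ?cards2 1?eq_sym ?fs //.
by apply/subsetP => u /set2P[] ->.
Qed.

Section Components.
Variable Y : {set T}.

Definition avoid_rel := [rel a b | [&& e a b, a \notin Y & b \notin Y]].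

Definition component v := [set u | connect avoid_rel v u].

Lemma avoid_rel_sym : connect_sym avoid_rel.
Proof.
apply: sym_connect_sym => a b /=.
by rewrite e_sym; case: (a \in Y); case: (b \in Y); rewrite ?andbF.
Qed.

Lemma mem_component v : v \in component v.
Proof. by rewrite inE connect0. Qed.

Lemma component_avoid v u : v \notin Y -> u \in component v -> u \notin Y.
Proof.
rewrite inE => vY /connectP[p]; elim: p v vY => [|w p IHp] v vY /=; first by move=> _ ->.
by case/andP=> /and3P[_ _ wY]; apply: IHp.
Qed.

Lemma component_eq v w u :
  u \in component v -> u \in component w -> component v = component w.
Proof.
rewrite !inE => cvu cwu; apply/setP => z.
by rewrite !inE (same_connect avoid_rel_sym cvu) (same_connect avoid_rel_sym cwu).
Qed.

Lemma nbhd_component_sub v : v \notin Y -> nbhd (component v) \subset Y.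
Proof.
move=> vY; apply/subsetP => u; rewrite inE => /andP[uC /exists_inP[w wC euw]].
have wY := component_avoid vY wC.
apply: contraR uC => uY; rewrite !inE in wC *; apply: connect_trans wC (connect1 _).
by rewrite /avoid_rel /= e_sym euw uY wY.
Qed.

Lemma component_connected v : v \notin Y -> connected_set e (component v).
Proof.
move=> vY; split=> [|x y xC yC]; first by apply/set0Pn; exists v; apply: mem_component.
have /connectP[p] : connect avoid_rel x y.
  by move: xC yC; rewrite !inE => cvx; rewrite (same_connect avoid_rel_sym cvx).
move=> pth ->; apply/connectP; exists p => //.
elim: p x xC pth => //= z p IHp x xC /andP[/and3P[exz xY zY] pth].
have zC : z \in component v.
  by move: xC; rewrite !inE => /connect_trans; apply; apply: connect1; rewrite /= exz xY.
by rewrite exz xC zC IHp.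
Qed.

End Components.

Definition components_star Y : {set osep T} :=
  [set flip (sep_of (component Y v)) | v in ~: Y].

Lemma component_not_touch Y v w : v \notin Y -> w \notin Y ->
  component Y v != component Y w -> ~~ touchb (component Y v) (component Y w).
Proof.
move=> vY wY; apply: contraNN => /orP[/set0Pn[u /setIP[uv uw]] | ].
  by rewrite (component_eq uv uw).
case/exists_inP=> x xv /exists_inP[y yw exy]; apply/eqP/(component_eq (u := y)) => //.
have [xY yY] := (component_avoid vY xv, component_avoid wY yw).
move: xv; rewrite !inE => /connect_trans; apply; apply: connect1.
by rewrite /avoid_rel /= exy xY yY.
Qed.

Lemma components_star_is_star Y : Y != setT -> is_star (components_star Y).
Proof.
rewrite -properT => /properP[_ [v _ vY]]; split.
  by apply/set0Pn; exists (flip (sep_of (component Y v))); apply: imset_f; rewrite inE.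
move=> _ _ /imsetP[x + ->] /imsetP[y + ->]; rewrite !inE flipK => xY yY neq.
apply: sep_of_le; apply: component_not_touch => //.
by apply/eqP => eqxy; apply: neq; rewrite eqxy.
Qed.

Lemma bigcap_components_star_sub Y : \bigcap_(s in components_star Y) s.2 \subset Y.
Proof.
apply/subsetP => u /bigcapP capu; apply: contraT => uY.
have : u \in (flip (sep_of (component Y u))).2 by apply: capu; apply: imset_f; rewrite inE.
by rewrite /= inE mem_component.
Qed.

Section TangleToBramble.
Variables (k : nat) (O : {set osep T}).
Hypothesis tO : Fk_tangle e k O.

(* Otherwise (V, V) is in S_k and {(V, V)} is a forbidden star. *)
Lemma tangle_card : k <= #|T|.
Proof.
have [orO [_ freeO]] := tO; rewrite leqNgt; apply/negP => Tk.
pose s0 : osep T := (setT, setT).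
have vs0 : in_vSk e k s0.
  by split; [split=> [|x y]; rewrite ?setUid // setDv inE | rewrite setIid cardsT].
have s0O : s0 \in O by case: (orientation_mem orO vs0).
apply: (freeO [set s0]); first by rewrite sub1set.
split; first by move=> s /set1P ->.
split; last by rewrite big_set1 cardsT.
by split=> [|r s /set1P -> /set1P ->]; [apply/set0Pn; exists s0; rewrite inE|].
Qed.

Lemma tangle_component Y : #|Y| < k ->
  exists2 v, v \notin Y & sep_of (component Y v) \in O.
Proof.
have [orO [_ freeO]] := tO; move=> Yk.
have vcomp v : v \notin Y -> in_vSk e k (sep_of (component Y v)).
  move=> vY; split; first exact: is_osep_sep_of.
  by rewrite sep_of_meet; apply: leq_ltn_trans (subset_leq_card (nbhd_component_sub vY)) Yk.
case: (boolP [exists v, (v \notin Y) && (sep_of (component Y v) \in O)]).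
  by case/existsP=> v /andP[vY vO]; exists v.
move/existsPn=> none; exfalso; apply: (freeO (components_star Y)).
  apply/subsetP => _ /imsetP[v + ->]; rewrite inE => vY.
  case: (orientation_mem orO (vcomp v vY)) => // vO.
  by move: (none v); rewrite vY vO.
split; first by move=> _ /imsetP[v + ->]; rewrite inE => vY; apply/in_vSk_flip/vcomp.
split; last exact: leq_ltn_trans (subset_leq_card (bigcap_components_star_sub Y)) Yk.
apply: components_star_is_star; apply: contraTneq Yk => ->.
by rewrite -leqNgt cardsT tangle_card.
Qed.

Lemma tangle_touch X Y : X != set0 -> sep_of X \in O -> sep_of Y \in O -> touch e X Y.
Proof.
have [orO [consO _]] := tO; have vO := orO.1.
move=> /set0Pn[x xX] XO YO; apply/touchP/negPn/negP => nt.
have := subsetP (not_touchb_subC nt) x; rewrite !inE xX => /(_ isT) xY.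
apply: (consO (flip (sep_of X)) (sep_of Y)) (sep_of_le nt) _.
- exact/in_vSk_flip/vO.
- exact: vO.
- move=> eqXY; have fX : flip (sep_of X) != sep_of X.
    by apply/eqP => /(congr1 fst)/setP/(_ x); rewrite /= !inE xX.
  by move: (orientationN orO (vO _ XO) XO fX); rewrite eqXY YO.
- by move=> /(congr1 snd)/setP/(_ x) /=; rewrite !inE xX (negbTE xY).
- by rewrite flipK.
Qed.

Definition tangle_bramble : {set {set T}} := [set X | connectedb X && (sep_of X \in O)].

Lemma tangle_bramble_is_bramble : is_bramble e tangle_bramble.
Proof.
split=> [X | X Y]; first by rewrite inE => /andP[/connectedP].
rewrite !inE => /andP[/connectedP[ne _] XO] /andP[_ YO].
exact: tangle_touch.
Qed.

Lemma tangle_bramble_order : k <= bramble_order tangle_bramble.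
Proof.
apply/bramble_order_geP; split=> [|Y coverY]; first exact: tangle_card.
rewrite leqNgt; apply/negP => /tangle_component[v vY vO].
have CB : component Y v \in tangle_bramble.
  by rewrite inE vO andbT; apply/connectedP/component_connected.
move/forall_inP: coverY => /(_ _ CB) /set0Pn[u /setIP[uY uC]].
by move: (component_avoid vY uC); rewrite uY.
Qed.

End TangleToBramble.

End BrambleTangle.

Theorem lemma5p8 (T : finType) (e : rel T) (k : nat) :
  symmetric e -> irreflexive e -> 0 < #|T| -> 0 < k ->
  (exists B : {set {set T}}, is_bramble e B /\ k <= bramble_order B) <->
  (exists O : {set osep T}, Fk_tangle e k O).
Proof.
move=> e_sym _ _ _; split=> [[B [brB ordB]] | [O tO]].
  by exists (bramble_orientation e k B); apply: bramble_orientation_tangle.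
exists (tangle_bramble e O).
by split; [apply: tangle_bramble_is_bramble tO | apply: tangle_bramble_order tO].
Qed.
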